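(* Let $n,m\ge1$, $r>0$, and let $\mathbf b_1,\dots,\mathbf b_m\in[0,\infty)^n$ be nonzero vectors with nonnegative entries. Put $D_{ij}=\frac{r}{m}(\mathbf b_i\cdot\mathbf b_j)$ for $i,j=1,\dots,m$ and $\overline D=\max_{i,j}D_{ij}$. Define a sequence $\alpha^{(t)}=(\alpha^{(t)}_1,\dots,\alpha^{(t)}_m)$, $t=0,1,2,\dots$, by $\alpha^{(0)}_k=\sqrt{1/(\overline D m)}$ for all $k$, and, given $\alpha^{(t)}$: compute $E_i^{(t)}=\sum_{j=1}^m D_{ij}\alpha^{(t)}_i\alpha^{(t)}_j-1$ for $i=1,\dots,m$; choose an index $k=k_t$ with $|E^{(t)}_k|=\max_i|E^{(t)}_i|$; set $\alpha^{(t+1)}_i=\alpha^{(t)}_i$ for $i\ne k$ and $$\alpha^{(t+1)}_k=\frac{-s+\sqrt{s^2+4D_{kk}}}{2D_{kk}},\qquad s=\sum_{i\ne k}D_{ik}\alpha^{(t)}_i.$$ Then the set $\{\alpha^{(t)}_k: k=1,\dots,m,\ t\ge0\}$ is bounded above, and there is a number $B>0$ such that $\alpha^{(t)}_k>B$ for all $k$ and all $t$.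
   Context: Note $D$ is symmetric with nonnegative entries and $D_{kk}>0$. The update of $\alpha_k$ is the unique positive root of the quadratic $D_{kk}\alpha_k^2+s\alpha_k-1=0$, i.e. it makes the $k$-th equation of the system $\sum_j D_{kj}\alpha_k\alpha_j=1$ hold exactly. *)

From HB Require Import structures.
From mathcomp Require Import all_boot all_order all_algebra.
Set Implicit Arguments. Unset Strict Implicit. Unset Printing Implicit Defensive.
Import Order.TTheory GRing.Theory Num.Theory.
Local Open Scope ring_scope.

Definition Dmat (R : rcfType) (n m : nat) (r : R) (b : 'I_m -> 'I_n -> R)
  (i j : 'I_m) : R := r / m%:R * \sum_(l < n) b i l * b j l.

(* Dbar = max_{i,j} D_ij (the entries are >= 0, so starting the fold at 0
   gives the true maximum since m >= 1). *)
Definition Dbar (R : rcfType) (n m : nat) (r : R) (b : 'I_m -> 'I_n -> R) : R :=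
  \big[Num.max/0]_(i < m) \big[Num.max/0]_(j < m) Dmat r b i j.

Definition Eres (R : rcfType) (n m : nat) (r : R) (b : 'I_m -> 'I_n -> R)
  (a : 'I_m -> R) (i : 'I_m) : R :=
  \sum_(j < m) Dmat r b i j * a i * a j - 1.

(* The updated coordinate x solves
   x (d x + s) = 1 with d = D_kk > 0 and s >= 0, so d x^2 <= 1 bounds it above
   by 1 + 1/d.  Once all coordinates are at most M, the bracket d x + s is at
   most (sum of all entries of D) * M, so x = 1/(d x + s) is bounded below. *)
From HB Require Import structures.
From mathcomp Require Import all_boot all_order all_algebra.
From mathcomp Require Import ring lra.
Set Implicit Arguments. Unset Strict Implicit. Unset Printing Implicit Defensive.
Import Order.TTheory GRing.Theory Num.Theory.
Local Open Scope ring_scope.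

Lemma ler_term_sum (R : numDomainType) (I : finType) (F : I -> R) (k : I) :
  (forall i, 0 <= F i) -> F k <= \sum_i F i.
Proof. by move=> F_ge0; rewrite (bigD1 k) //= lerDl sumr_ge0. Qed.

Arguments ler_term_sum {R I} F k.

Definition root_update (R : rcfType) (d s : R) : R :=
  (- s + Num.sqrt (s ^+ 2 + 4 * d)) / (2 * d).

Section RootUpdate.

Variables (R : rcfType) (d s : R).
Hypotheses (d_gt0 : 0 < d) (s_ge0 : 0 <= s).

Let x := root_update d s.

Lemma root_update_gt0 : 0 < x.
Proof.
have s_lt_sqrt : s < Num.sqrt (s ^+ 2 + 4 * d).
  rewrite -[s in s < _]ger0_norm // -sqrtr_sqr ltr_sqrt ?ltrDl ?mulr_gt0 //.
  by rewrite ltr_wpDl ?sqr_ge0 ?mulr_gt0.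
by rewrite divr_gt0 ?mulr_gt0 // addrC subr_gt0.
Qed.

Lemma root_updateE : x * (d * x + s) = 1.
Proof.
have sqrt_sq : Num.sqrt (s ^+ 2 + 4 * d) ^+ 2 = s ^+ 2 + 4 * d.
  by rewrite sqr_sqrtr // addr_ge0 ?sqr_ge0 ?mulr_ge0 ?ltW.
have d_neq0 : d != 0 by rewrite gt_eqF.
rewrite /x /root_update.
set q := Num.sqrt _ in sqrt_sq *.
have -> : (- s + q) / (2 * d) * (d * ((- s + q) / (2 * d)) + s)
    = (q ^+ 2 - s ^+ 2) / (4 * d) by field.
by rewrite sqrt_sq; field.
Qed.

Lemma root_update_le : x <= 1 + d^-1.
Proof.
have x_gt0 := root_update_gt0.
have dxx_le1 : d * x * x <= 1.
  have -> : d * x * x = 1 - s * x by rewrite -root_updateE; ring.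
  by rewrite gerBl mulr_ge0 // ltW.
case: (lerP x 1) => [x_le1 | x_gt1].
  by rewrite ler_wpDr // invr_ge0 ltW.
have dx_le1 : d * x <= 1.
  apply: le_trans dxx_le1; apply: ler_peMr; last exact: ltW.
  by rewrite mulr_ge0 // ltW.
by rewrite ler_wpDl // -(ler_pM2l d_gt0) mulfV ?gt_eqF // ltW.
Qed.

Lemma root_update_ge (c : R) : d * x + s <= c -> c^-1 <= x.
Proof.
move=> le_c; have x_gt0 := root_update_gt0.
have c_gt0 : 0 < c.
  by apply: lt_le_trans le_c; rewrite ltr_wpDr // mulr_gt0.
by rewrite -(ler_pM2l c_gt0) mulfV ?gt_eqF // -root_updateE mulrC ler_pM2r.
Qed.

End RootUpdate.

Section CoordinateUpdate.

Variables (R : rcfType) (m : nat) (D : 'I_m -> 'I_m -> R).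
Variables (alpha : nat -> 'I_m -> R) (kk : nat -> 'I_m) (a0 : R).

Hypotheses (D_ge0 : forall i j, 0 <= D i j) (D_diag_gt0 : forall k, 0 < D k k).
Hypotheses (a0_gt0 : 0 < a0) (alpha0 : forall k, alpha 0%N k = a0).
Hypothesis alpha_keep : forall t i, i != kk t -> alpha t.+1 i = alpha t i.
Hypothesis alpha_update : forall t, alpha t.+1 (kk t) =
  root_update (D (kk t) (kk t)) (\sum_(i < m | i != kk t) D i (kk t) * alpha t i).

Let M := a0 + \sum_k (1 + (D k k)^-1).
Let C := \sum_k \sum_i D i k.
Let L := Num.min a0 (C * M)^-1.

Let term_ge0 k : 0 <= 1 + (D k k)^-1.
Proof. by rewrite addr_ge0 // invr_ge0 ltW. Qed.

Let M_gt0 : 0 < M.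
Proof. by rewrite ltr_wpDr // sumr_ge0. Qed.

Let C_gt0 : 0 < C.
Proof.
(* [kk 0] witnesses that the index type is nonempty. *)
rewrite /C; have k := kk 0%N.
have col_ge0 j : 0 <= \sum_i D i j by apply: sumr_ge0.
apply: (lt_le_trans (D_diag_gt0 k)); apply: le_trans (ler_term_sum _ k col_ge0).
exact: ler_term_sum.
Qed.

Let L_gt0 : 0 < L.
Proof. by rewrite lt_min a0_gt0 invr_gt0 mulr_gt0. Qed.

Let update_bounds t :
  (forall i, L <= alpha t i <= M) -> L <= alpha t.+1 (kk t) <= M.
Proof.
move=> bounds; set k := kk t; rewrite alpha_update.
set d := D k k; set s := \sum_(i < m | i != k) _.
have d_gt0 : 0 < d := D_diag_gt0 k.
have alpha_leM i : alpha t i <= M by case/andP: (bounds i).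
have alpha_ge0 i : 0 <= alpha t i.
  by case/andP: (bounds i) => L_le _; apply: le_trans L_le; apply: ltW.
have s_ge0 : 0 <= s by apply: sumr_ge0 => i _; rewrite mulr_ge0.
have x_leM : root_update d s <= M.
  apply: le_trans (root_update_le d_gt0 s_ge0) _.
  by apply: ler_wpDl; [exact: ltW | exact: ler_term_sum].
have bracket_le : d * root_update d s + s <= C * M.
  have s_le : s <= \sum_(i < m | i != k) D i k * M.
    by apply: ler_sum => i _; rewrite ler_wpM2l.
  apply: le_trans (lerD (ler_wpM2l (ltW d_gt0) x_leM) s_le) _.
  have -> : d * M + \sum_(i < m | i != k) D i k * M = \sum_i D i k * M.
    by rewrite [RHS](bigD1 k).
  rewrite -mulr_suml ler_pM2r //; apply: ler_term_sum => j.
  exact: sumr_ge0.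
by rewrite x_leM andbT ge_min (root_update_ge d_gt0 s_ge0 bracket_le) orbT.
Qed.

Lemma coordinate_update_bounds t k : L <= alpha t k <= M.
Proof.
elim: t k => [|t IH] k.
  by rewrite alpha0 ge_min lexx lerDl sumr_ge0.
case: (eqVneq k (kk t)) => [-> | k_neq]; first exact: update_bounds.
by rewrite alpha_keep.
Qed.

Lemma coordinate_update_bounded :
  exists L M : R, 0 < L /\ forall t k, L <= alpha t k <= M.
Proof.
by exists L, M; split; last exact: coordinate_update_bounds.
Qed.

End CoordinateUpdate.

Section GramMatrix.

Variables (R : rcfType) (n m : nat) (r : R) (b : 'I_m -> 'I_n -> R).
Hypotheses (r_gt0 : 0 < r) (b_ge0 : forall i l, 0 <= b i l).

Lemma Dmat_ge0 i j : 0 <= Dmat r b i j.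
Proof.
rewrite /Dmat mulr_ge0 ?divr_ge0 ?ler0n ?(ltW r_gt0) //.
by apply: sumr_ge0 => l _; rewrite mulr_ge0.
Qed.

Lemma Dmat_diag_gt0 k : (exists l, b k l != 0) -> 0 < Dmat r b k k.
Proof.
case=> l bkl_neq0; have bkl_gt0 : 0 < b k l by rewrite lt_def bkl_neq0 b_ge0.
have m_gt0 : (0 < m)%N by apply: leq_ltn_trans (ltn_ord k).
rewrite /Dmat mulr_gt0 ?divr_gt0 ?ltr0n //.
apply: lt_le_trans (ler_term_sum (fun l => b k l * b k l) l _); first exact: mulr_gt0.
by move=> l'; rewrite mulr_ge0.
Qed.

Lemma Dmat_le_Dbar i j : Dmat r b i j <= Dbar r b.
Proof.
apply: le_trans (le_bigmax 0 (fun i => \big[Num.max/0]_(j < m) Dmat r b i j) i).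
exact: le_bigmax.
Qed.

End GramMatrix.

Theorem lemma2 (R : rcfType) (n m : nat) (r : R) (b : 'I_m -> 'I_n -> R)
  (alpha : nat -> 'I_m -> R) (kk : nat -> 'I_m) :
  (0 < n)%N -> (0 < m)%N -> 0 < r ->
  (forall i l, 0 <= b i l) ->
  (forall i, exists l, b i l != 0) ->
  (forall k, alpha 0%N k = Num.sqrt (1 / (Dbar r b * m%:R))) ->
  (forall t i, `|Eres r b (alpha t) i| <= `|Eres r b (alpha t) (kk t)|) ->
  (forall t i, i != kk t -> alpha t.+1 i = alpha t i) ->
  (forall t, let k := kk t in
     let s := \sum_(i < m | i != k) Dmat r b i k * alpha t i in
     alpha t.+1 k = (- s + Num.sqrt (s ^+ 2 + 4 * Dmat r b k k)) / (2 * Dmat r b k k)) ->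
  (exists M : R, forall t k, alpha t k <= M) /\
  (exists B : R, 0 < B /\ forall t k, B < alpha t k).
Proof.
(* The bounds hold for any choice of the updated index, so the greedy rule is not used. *)
move=> _ m_gt0 r_gt0 b_ge0 b_neq0 alpha0 _ alpha_keep alpha_update.
have D_diag_gt0 k := Dmat_diag_gt0 r_gt0 b_ge0 (b_neq0 k).
have a0_gt0 : 0 < Num.sqrt (1 / (Dbar r b * m%:R)).
  have Dbar_gt0 := lt_le_trans (D_diag_gt0 (Ordinal m_gt0)) (Dmat_le_Dbar _ _ _ _).
  by rewrite sqrtr_gt0 divr_gt0 ?mulr_gt0 ?ltr0n.
have [L [M [L_gt0 bounds]]] := coordinate_update_bounded
  (Dmat_ge0 r_gt0 b_ge0) D_diag_gt0 a0_gt0 alpha0 alpha_keep alpha_update.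
split; first by exists M => t k; case/andP: (bounds t k).
exists (L / 2); split=> [|t k]; first by rewrite divr_gt0.
by case/andP: (bounds t k) => L_le _; apply: lt_le_trans L_le; lra.
Qed.
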